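(* In the Part I procedure, let $xy$ be an edge processed in a bridge step of phase $\Delta$ whose skewness $|\mathrm{lcp}(x)-\mathrm{lcp}(y)|$ is neither $0$ nor $2$, and let $z$ be a vertex that becomes even in this bridge step. Then $\mathrm{lcp}(z)>\max(\mathrm{lcp}(x),\mathrm{lcp}(y))$. Consequently, any bridge of phase $\Delta$ having $z$ as an endpoint has skewness larger than that of $xy$.
   Context: Let $G=(V,E)$ be a finite undirected graph and $M$ a matching in $G$; free vertices and $\mathit{mate}(v)$ are as usual. The Part I procedure maintains a search structure $S$: a forest whose nodes are either single (odd) vertices or blossoms (disjoint vertex sets with a distinguished base vertex), each tree rooted at a blossom containing a free vertex. Vertices in $S$ are labelled even (those in blossoms) or odd; vertices not in $S$ are unlabelled. A vertex is born even/odd according to the label it receives when inserted. The procedure maintains $\mathrm{lcp}(v)$ for even vertices and $\mathrm{lcp}_{\mathrm{odd}}(v)$ for vertices born odd. The blossom nodes currently in $S$ are the maximal blossoms. Phase $0$: every free vertex $v$ becomes the root of its own tree as a trivial blossom $\{v\}$ with base $v$, even, $\mathrm{lcp}(v)=0$. For $\Delta=1,2,\dots$, phase $\Delta$ does: (i) if $\Delta$ is even, growth steps: while some even vertex $v$ with $\mathrm{lcp}(v)=\Delta-2$ has a neighbour $x$ not in $S$, add $x$ as an odd child of the blossom containing $v$ with $\mathrm{lcp}_{\mathrm{odd}}(x)=\Delta-1$, and $\mathit{mate}(x)$ as a child of $x$, as a trivial even blossom with $\mathrm{lcp}(\mathit{mate}(x))=\Delta$; (ii) bridge steps: while there is a non-matching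 edge $xy$ with $x,y$ even, in different maximal blossoms $B_x,B_y$, and $\mathrm{lcp}(x)+\mathrm{lcp}(y)=2\Delta-2$: if $B_x,B_y$ lie in different trees the procedure stops; otherwise let $B$ be the lowest common ancestor of $B_x,B_y$; every odd vertex $z$ on the tree paths from $B_x$ and $B_y$ to $B$ becomes even with $\mathrm{lcp}(z)=\mathrm{lcp}(x)+1+\mathrm{lcp}(y)-\mathrm{lcp}_{\mathrm{odd}}(z)$, and $B$ together with all blossoms and odd vertices on both paths is merged into one new blossom with base equal to the base of $B$, replacing $B$ in the tree. The skewness of an edge $xy$ with both endpoints even is $|\mathrm{lcp}(x)-\mathrm{lcp}(y)|$. *)

From mathcomp Require Import all_boot.
Set Implicit Arguments. Unset Strict Implicit. Unset Printing Implicit Defensive.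

(* Labels: None = unlabelled (not in S), Some true = even, Some false = odd. *)
Definition label := option bool.
Definition Unl : label := None.
Definition Even : label := Some true.
Definition Odd : label := Some false.

(* State of the search structure S.
   - lab v       : label of v
   - lcp v       : lcp(v) (meaningful for even vertices)
   - lcpo v      : lcp_odd(v) (meaningful for vertices born odd)
   - oparent x   : for an odd vertex x, the even vertex v through which x was
                   attached (x is a child of the maximal blossom containing v)
   - blos v      : for an even vertex v, the base of the maximal blossom
                   containing v (blossoms are identified by their base). *)
Record state (T : Type) := State {
  lab : T -> label;
  lcp : T -> nat;
  lcpo : T -> nat;
  oparent : T -> T;
  blos : T -> T }.

(* Nodes of the forest: (true, b) = maximal blossom with base b,
   (false, x) = single odd vertex x. *)
Definition node (T : Type) := (bool * T)%type.

Definition skew (a b : nat) : nat := (a - b) + (b - a).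

Section PartI.
Variables (T : finType) (adj : rel T) (mate : T -> option T).

(* Tree parent of a node: the parent of the blossom with base b is the odd
   vertex mate(b) (none if b is free, i.e. a root); the parent of the odd
   vertex x is the maximal blossom containing oparent(x). *)
Definition par (s : state T) (u : node T) : option (node T) :=
  if u.1 then (match mate u.2 with Some x => Some (false, x) | None => None end)
  else Some (true, blos s (oparent s u.2)).

Fixpoint ancs (s : state T) (k : nat) (u : node T) : seq (node T) :=
  match k with
  | 0 => [:: u]
  | k'.+1 => u :: match par s u with Some p => ancs s k' p | None => [::] end
  end.

(* list of ancestors u, parent u, ..., root (depth bounded by 2|V|+1) *)
Definition anc (s : state T) (u : node T) : seq (node T) :=
  ancs s (2 * #|T|).+1 u.

Definition root (s : state T) (u : node T) : node T := last u (anc s u).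

Definition lca (s : state T) (u v : node T) : node T :=
  head u [seq w <- anc s u | w \in anc s v].

Definition pathto (s : state T) (u w : node T) : seq (node T) :=
  take (index w (anc s u)) (anc s u).

Definition init_state : state T :=
  State (fun v => if mate v is None then Even else Unl)
        (fun _ => 0) (fun _ => 0) id id.

Definition grow_elig (D : nat) (s : state T) (v x : T) : Prop :=
  ~~ odd D /\ lab s v = Even /\ lcp s v = D - 2 /\ adj v x /\ lab s x = Unl.

Definition grow_step (D : nat) (s : state T) (v x : T) (s' : state T) : Prop :=
  grow_elig D s v x /\
  exists m, mate x = Some m /\
   s' = State
     (fun w => if w == x then Odd else if w == m then Even else lab s w)
     (fun w => if w == m then D else lcp s w)
     (fun w => if w == x then D - 1 else lcpo s w)
     (fun w => if w == x then v else oparent s w)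
     (fun w => if w == m then m else blos s w).

Definition is_bridge (D : nat) (s : state T) (x y : T) : Prop :=
  adj x y /\ mate x <> Some y /\ lab s x = Even /\ lab s y = Even /\
  blos s x <> blos s y /\ lcp s x + lcp s y = 2 * D - 2.

Definition bridge_step (D : nat) (s : state T) (x y : T) (s' : state T) : Prop :=
  is_bridge D s x y /\
  let Bx : node T := (true, blos s x) in
  let By : node T := (true, blos s y) in
  root s Bx = root s By /\
  let B := lca s Bx By in
  let P := pathto s Bx B ++ pathto s By B in
  let becomes_even w := ((false, w) \in P) && (lab s w == Odd) in
  let in_new w :=
    ((lab s w == Even) && (((true, blos s w) \in P) || ((true, blos s w) == B)))
    || becomes_even w in
  B.1 = true /\
  s' = State
     (fun w => if becomes_even w then Even else lab s w)
     (fun w => if becomes_even w then lcp s x + 1 + lcp s y - lcpo s w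
               else lcp s w)
     (lcpo s)
     (oparent s)
     (fun w => if in_new w then B.2 else blos s w).

(* ---- configurations: (phase, in growth sub-phase?, state) ---- *)
Definition config := (nat * bool * state T)%type.

Inductive step : config -> config -> Prop :=
| st_grow D s v x s' :
    grow_step D s v x s' -> step (D, true, s) (D, true, s')
| st_endgrow D s :
    (forall v x, ~ grow_elig D s v x) -> step (D, true, s) (D, false, s)
| st_bridge D s x y s' :
    bridge_step D s x y s' -> step (D, false, s) (D, false, s')
| st_endbridge D s :
    (forall x y, ~ is_bridge D s x y) -> step (D, false, s) (D.+1, true, s).

Inductive reach : config -> config -> Prop :=
| reach_refl c : reach c c
| reach_step c1 c2 c3 : step c1 c2 -> reach c2 c3 -> reach c1 c3.

(* after phase 0, the procedure starts phase 1 *)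
Definition init_config : config := (1, true, init_state).

End PartI.

From Pilot Require Import Defs.
From mathcomp Require Import all_boot zify.
Set Implicit Arguments. Unset Strict Implicit. Unset Printing Implicit Defensive.

(* A vertex z that turns even in the bridge step for xy is an odd vertex on the
   tree path from the blossom of x (say) up to the lowest common ancestor B, and
   lcp(z) becomes lcp(x) + lcp(y) + 1 - lcp_odd(z).  Along a tree path lcp_odd
   strictly decreases going up, and each odd vertex on it has lcp_odd below both
   labels of every even vertex in the blossoms beneath it; hence lcp_odd(z) <
   lcp(x), and lcp_odd(z) < lcp_odd(x) if x was born odd.  If lcp(x) < lcp(y) we
   are done.  Otherwise lcp(y) <= D - 2, so once the growth steps of phase D are
   over the neighbour x of y is labelled, and was labelled early: either x was
   born even with lcp(x) <= lcp(y) + 2, which the skewness excludes since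
   lcp(x) + lcp(y) = 2D - 2 is even, or x was born odd with lcp_odd(x) <=
   lcp(y) + 1, whence lcp_odd(z) <= lcp(y).  Finally, the lcp of an even vertex
   does not change during the bridge steps of a phase, and bridges of phase D
   have lcp-sum 2D - 2, so a bridge zw has skewness 2 lcp(z) - (2D - 2) >
   skew(x, y). *)

(* [pathto mate s u w] is [before w (anc mate s u)] by definition. *)
Definition before (X : eqType) (B : X) (L : seq X) : seq X := take (index B L) L.

Lemma before_head (X : eqType) (a : X) (L : seq X) : before a (a :: L) = [::].
Proof. by rewrite /before /= eqxx. Qed.

Lemma before_cons (X : eqType) (B a : X) (L : seq X) :
  a != B -> before B (a :: L) = a :: before B L.
Proof. by rewrite /before /= => /negbTE ->. Qed.

Section PartI.
Variables (T : finType) (adj : rel T) (mate : T -> option T).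
Hypothesis adj_sym : symmetric adj.
Hypothesis adj_irr : irreflexive adj.
Hypothesis mate_matching : forall u v, mate u = Some v -> adj u v /\ mate v = Some u.

Lemma mate_inj u v w : mate u = Some w -> mate v = Some w -> u = v.
Proof. by move=> /mate_matching[_ +] /mate_matching[_]; congruence. Qed.

Lemma ancs_root s k b : mate b = None -> ancs mate s k (true, b) = [:: (true, b)].
Proof. by case: k => //= k; rewrite /par /= => ->. Qed.

Lemma ancs_mate s k b q :
  mate b = Some q -> ancs mate s k.+1 (true, b) = (true, b) :: ancs mate s k (false, q).
Proof. by rewrite /= /par /= => ->. Qed.

Lemma ancs_oddS s k q :
  ancs mate s k.+1 (false, q) = (false, q) :: ancs mate s k (true, blos s (oparent s q)).
Proof. by []. Qed.

(* [z] was labelled before [w] received either of its labels. *)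
Definition lcpo_lt (s : state T) (z w : T) : Prop :=
  lcpo s z < lcp s w /\ (0 < lcpo s w -> lcpo s z < lcpo s w).

Lemma lcpo_lt_lower s p q w : lcpo s p < lcpo s q -> lcpo_lt s q w -> lcpo_lt s p w.
Proof. by rewrite /lcpo_lt; lia. Qed.

Lemma lcpo_lt_trans s z v q u :
  lcpo_lt s z v -> lcp s v < lcpo s q -> lcpo_lt s q u -> lcpo_lt s z u.
Proof. by rewrite /lcpo_lt; lia. Qed.

Record forest_inv (s : state T) : Prop := {
  oparent_even : forall z, lab s z = Odd -> lab s (oparent s z) = Even;
  base_mate_odd : forall w p, lab s w = Even -> mate (blos s w) = Some p -> lab s p = Odd;
  lcp_oparent_lt : forall z, lab s z = Odd -> lcp s (oparent s z) < lcpo s z;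
  base_mate_lcpo_lt : forall w p, lab s w = Even -> mate (blos s w) = Some p -> lcpo_lt s p w }.

Section Chain.
Variables (s : state T) (F : forest_inv s).

(* [L] is the list of tree ancestors of the blossom containing [u], starting
   with that blossom. *)
Record chain_facts (u : T) (L : seq (node T)) : Prop := {
  chain_blossom_even : forall b, (true, b) \in L -> exists2 w, lab s w = Even & blos s w = b;
  chain_odd_lcpo_lt : forall z, (false, z) \in L -> lcpo_lt s z u;
  chain_mate_lcpo_lt : forall b p, (true, b) \in L -> mate b = Some p -> lcpo_lt s p u;
  chain_below_odd : forall b p z, (true, b) \in L -> mate b = Some p ->
    (false, z) \in before (true, b) L -> lcpo s p < lcpo s z;
  chain_below_even : forall b p w, (true, b) \in L -> mate b = Some p -> lab s w = Even ->
    (true, blos s w) \in before (true, b) L -> lcpo_lt s p w;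
  chain_mate_closed : forall b p w, (true, b) \in L -> lab s w = Even ->
    mate (blos s w) = Some p -> (false, p) \in before (true, b) L ->
    (true, blos s w) \in before (true, b) L }.

Lemma chain_facts_nil u : chain_facts u [::].
Proof. by split. Qed.

Lemma chain_facts_root u : lab s u = Even -> chain_facts u [:: (true, blos s u)].
Proof.
move=> hu; split=> [b|z|b p|b p z|b p w|b p w]; rewrite ?inE //= => /eqP[->];
  rewrite ?before_head //.
- by exists u.
- exact: base_mate_lcpo_lt.
Qed.

Lemma chain_facts_cons u q L :
  lab s u = Even -> mate (blos s u) = Some q -> chain_facts (oparent s q) L ->
  chain_facts u [:: (true, blos s u), (false, q) & L].
Proof.
move=> hu hq C; set L0 := [:: _, _ & L].
have q_odd := base_mate_odd F hu hq.
have q_lt_u := base_mate_lcpo_lt F hu hq.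
have v_lt_q := lcp_oparent_lt F q_odd.
have p_lt_q b p : (true, b) \in L -> mate b = Some p -> lcpo s p < lcpo s q.
  by move=> /(chain_mate_lcpo_lt C) h /h[]; lia.
have blossom_cases b : (true, b) \in L0 ->
    b = blos s u \/ (true, b) \in L /\
    before (true, b) L0 = [:: (true, blos s u), (false, q) & before (true, b) L].
  rewrite !inE => /or3P[/eqP[->]|//|inL]; first by left.
  have [->|ne] := eqVneq b (blos s u); first by left.
  by right; rewrite /L0 !before_cons // xpair_eqE eq_sym ne.
split.
- move=> b /blossom_cases[->|[/(chain_blossom_even C) //]]; by exists u.
- move=> z; rewrite !inE => /or3P[//|/eqP[->] //|/(chain_odd_lcpo_lt C) h].
  exact: lcpo_lt_trans h v_lt_q q_lt_u.
- move=> b p /blossom_cases[->|[inL _]]; first by rewrite hq => -[<-].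
  by move=> /(chain_mate_lcpo_lt C inL) h; exact: lcpo_lt_trans h v_lt_q q_lt_u.
- move=> b p z /blossom_cases[->|[inL ->]] hp; first by rewrite before_head.
  rewrite !inE => /or3P[//|/eqP[->]|]; first exact: p_lt_q _ _ inL hp.
  by move/(chain_below_odd C inL hp).
- move=> b p w /blossom_cases[->|[inL ->]] hp hw; first by rewrite before_head.
  rewrite !inE => /or3P[/eqP[hb]|//|]; last by move/(chain_below_even C inL hp hw).
  apply: lcpo_lt_lower (p_lt_q _ _ inL hp) _.
  by rewrite -hb in hq; exact (base_mate_lcpo_lt F hw hq).
- move=> b p w /blossom_cases[->|[inL ->]] hw hp; first by rewrite before_head.
  rewrite !inE => /or3P[//|/eqP[hpq]|].
    by rewrite hpq in hp; rewrite (mate_inj hp hq) eqxx.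
  by move/(chain_mate_closed C inL hw hp) ->; rewrite !orbT.
Qed.

Lemma chain_facts_ancs k u : lab s u = Even -> chain_facts u (ancs mate s k (true, blos s u)).
Proof.
elim/ltn_ind: k u => k IH u hu.
case hq: (mate (blos s u)) => [q|]; last by rewrite ancs_root //; exact: chain_facts_root.
case: k IH => [|[|k]] IH; first exact: chain_facts_root.
  by rewrite (ancs_mate _ _ hq); apply: chain_facts_cons (chain_facts_nil _).
rewrite (ancs_mate _ _ hq) ancs_oddS; apply: chain_facts_cons => //; apply: IH => //.
exact/(oparent_even F)/(base_mate_odd F hu hq).
Qed.
End Chain.

Record invariant (D : nat) (growing : bool) (s : state T) : Prop := {
  phase_gt0 : 0 < D;
  unl_mate_unl : forall w, lab s w = Unl -> exists2 m, mate w = Some m & lab s m = Unl;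
  unl_lcpo0 : forall w, lab s w = Unl -> lcpo s w = 0;
  odd_lcpo_gt0 : forall w, lab s w = Odd -> 0 < lcpo s w;
  even_lcp_even : forall w, lab s w = Even -> ~~ odd (lcp s w);
  lcpo_gt0_odd : forall w, 0 < lcpo s w -> odd (lcpo s w);
  lcpo_lt_phase : forall w, lcpo s w < D;
  born_even_lcp_le : forall w, lab s w <> Unl -> lcpo s w = 0 -> lcp s w <= D;
  inv_forest : forest_inv s;
  (* During growth steps, even vertices with [lcp = D - 2] may still have
     unlabelled neighbours; once growth is over, none has. *)
  neighbour_labelled : forall v w, lab s v = Even -> adj v w -> lcp s v + 2 <= D ->
    ~~ growing || (lcp s v + 2 < D) ->
    [/\ lab s w <> Unl, lcpo s w = 0 -> lcp s w <= lcp s v + 2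
      & 0 < lcpo s w -> lcpo s w <= lcp s v + 1] }.

Lemma invariant_init : invariant 1 true (init_state mate).
Proof.
split=> //=; try by move=> w; case: (mate w).
- move=> w; case hm: (mate w) => [m|] // _; exists m => //.
  by have [_ ->] := mate_matching hm.
- by split=> //= w; case: (mate w).
Qed.

Lemma invariant_end_growth D s :
  invariant D true s -> (forall v x, ~ grow_elig adj D s v x) -> invariant D false s.
Proof.
case=> ? ? ? ? even_lcp ? lt_phase born_le ? nb no_growth; split=> // v w hv hvw hD _.
have [hlt|hD'] := ltnP (lcp s v + 2) D; first exact: nb.
have {hD'}hD : lcp s v + 2 = D by lia.
have w_lab : lab s w <> Unl.
  move=> hw; apply: (no_growth v w); split; last by split=> //; split; [lia|].
  by move: (even_lcp _ hv); lia.
split=> // [/(born_le _ w_lab)|_]; [lia | have := lt_phase w; lia].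
Qed.

Lemma invariant_end_bridges D s : invariant D false s -> invariant D.+1 true s.
Proof.
case=> ? ? ? ? ? ? lt_phase born_le ? nb; split=> //.
- by move=> w; have := lt_phase w; lia.
- by move=> w h0 h1; have := born_le w h0 h1; lia.
- by move=> v w hv hvw _ /= hlt; apply: nb => //; lia.
Qed.

Definition grown (D : nat) (s : state T) (v x m : T) : state T :=
  State (fun w => if w == x then Odd else if w == m then Even else lab s w)
        (fun w => if w == m then D else lcp s w)
        (fun w => if w == x then D - 1 else lcpo s w)
        (fun w => if w == x then v else oparent s w)
        (fun w => if w == m then m else blos s w).

Lemma grow_stepE D s v x s' : grow_step adj mate D s v x s' ->
  grow_elig adj D s v x /\ exists2 m, mate x = Some m & s' = grown D s v x m.
Proof. by case=> ? [m [? ->]]; split=> //; exists m. Qed.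

Section GrowStep.
Variables (D : nat) (s : state T) (v x m : T).
Hypotheses (I : invariant D true s) (elig : grow_elig adj D s v x) (mate_x : mate x = Some m).
Let g := grown D s v x m.

Let D_even : ~~ odd D. Proof. by case: elig. Qed.
Let v_even : lab s v = Even. Proof. by case: elig => _ []. Qed.
Let lcp_v : lcp s v = D - 2. Proof. by case: elig => _ [_ []]. Qed.
Let x_unl : lab s x = Unl. Proof. by case: elig => _ [_ [_ []]]. Qed.
Let mate_m : mate m = Some x. Proof. by have [] := mate_matching mate_x. Qed.
Let m_unl : lab s m = Unl.
Proof. by have [m' hm' ?] := unl_mate_unl I x_unl; move: hm'; rewrite mate_x => -[->]. Qed.
Let m_lcpo0 : lcpo s m = 0. Proof. exact (unl_lcpo0 I m_unl). Qed.
Let D_ge2 : 2 <= D. Proof. by have := phase_gt0 I; move: D_even; lia. Qed.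

Let labelled_neq t : lab s t <> Unl -> t != x /\ t != m.
Proof. by move=> ht; split; apply/eqP => et; apply: ht; rewrite et. Qed.

Let grown_other t : t != x -> t != m ->
  [/\ lab g t = lab s t, lcp g t = lcp s t, lcpo g t = lcpo s t,
      oparent g t = oparent s t & blos g t = blos s t].
Proof. by move=> /negbTE tx /negbTE tm; rewrite /g /= tx tm. Qed.

Let grown_labelled t : lab s t <> Unl ->
  [/\ lab g t = lab s t, lcp g t = lcp s t, lcpo g t = lcpo s t,
      oparent g t = oparent s t & blos g t = blos s t].
Proof. by case/labelled_neq; apply: grown_other. Qed.

Let x_neq_m : x != m.
Proof. by apply: contraTneq (proj1 (mate_matching mate_x)) => <-; rewrite adj_irr. Qed.

Let grown_x : [/\ lab g x = Odd, lcpo g x = D - 1 & oparent g x = v].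
Proof. by rewrite /g /= eqxx. Qed.

Let grown_m : [/\ lab g m = Even, lcp g m = D, lcpo g m = 0 & blos g m = m].
Proof. by rewrite /g /= eqxx eq_sym (negbTE x_neq_m) m_lcpo0. Qed.

Let grown_cases (P : T -> Prop) :
  P x -> P m -> (forall t, t != x -> t != m -> P t) -> forall t, P t.
Proof.
move=> Px Pm Po t; have [->|tx] := eqVneq t x => //.
by have [->|tm] := eqVneq t m; last exact: Po.
Qed.

Let grown_lab w : lab g w = if w == x then Odd else if w == m then Even else lab s w.
Proof. by []. Qed.

Lemma forest_inv_grow : forest_inv g.
Proof.
have F := inv_forest I; have v_lab : lab s v <> Unl by rewrite v_even.
have [v_lab' v_lcp' _ _ _] := grown_labelled v_lab.
split=> [z|w p|z|w p]; rewrite grown_lab.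
- case: eqP => [-> _|_]; first by have [_ _ ->] := grown_x; rewrite v_lab'.
  case: eqP => // _ hz; have hp := oparent_even F hz.
  have z_lab : lab s z <> Unl by rewrite hz.
  have p_lab : lab s (oparent s z) <> Unl by rewrite hp.
  have [_ _ _ -> _] := grown_labelled z_lab.
  by have [-> _ _ _ _] := grown_labelled p_lab.
- case: eqP => // _; case: eqP => [-> _|_ hw].
    by have [_ _ _ ->] := grown_m; rewrite mate_m => -[<-]; case: grown_x.
  have w_lab : lab s w <> Unl by rewrite hw.
  have [_ _ _ _ ->] := grown_labelled w_lab.
  move=> /(base_mate_odd F hw) hp; have p_lab : lab s p <> Unl by rewrite hp.
  by have [-> _ _ _ _] := grown_labelled p_lab.
- case: eqP => [-> _|_]; first by have [_ -> ->] := grown_x; rewrite v_lcp' lcp_v; lia.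
  case: eqP => // _ hz; have hp := oparent_even F hz.
  have z_lab : lab s z <> Unl by rewrite hz.
  have p_lab : lab s (oparent s z) <> Unl by rewrite hp.
  have [_ _ -> -> _] := grown_labelled z_lab.
  have [_ -> _ _ _] := grown_labelled p_lab.
  exact (lcp_oparent_lt F hz).
- rewrite /lcpo_lt; case: eqP => // _; case: eqP => [-> _|_ hw].
    have [_ -> -> ->] := grown_m; rewrite mate_m => -[<-].
    by have [_ -> _] := grown_x; lia.
  have w_lab : lab s w <> Unl by rewrite hw.
  have [_ -> -> _ ->] := grown_labelled w_lab.
  move=> hp; have p_lab : lab s p <> Unl by rewrite (base_mate_odd F hw hp).
  have [_ _ -> _ _] := grown_labelled p_lab.
  exact (base_mate_lcpo_lt F hw hp).
Qed.

Lemma invariant_grow : invariant D true g.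
Proof.
have [x_odd x_lcpo _] := grown_x; have [m_even m_lcp m_lcpo _] := grown_m.
split=> [||w|w|w|w|w|w||v' w].
- exact: phase_gt0 I.
- move=> w; have [->|wx] := eqVneq w x; first by rewrite x_odd.
  have [->|wm] := eqVneq w m; first by rewrite m_even.
  have [-> _ _ _ _] := grown_other wx wm => /(unl_mate_unl I)[m' hm' m'_unl].
  exists m' => //.
  have m'x : m' != x by apply: contra_neq wm => e; apply: (mate_inj hm'); rewrite e.
  have m'm : m' != m by apply: contra_neq wx => e; apply: (mate_inj hm'); rewrite e.
  by have [-> _ _ _ _] := grown_other m'x m'm.
- elim/grown_cases: w => [|| t tx tm]; rewrite ?x_odd ?m_even //.
  by have [-> _ -> _ _] := grown_other tx tm; apply (unl_lcpo0 I).
- elim/grown_cases: w => [|| t tx tm]; rewrite ?x_lcpo ?m_even //; first by lia.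
  by have [-> _ -> _ _] := grown_other tx tm; apply (odd_lcpo_gt0 I).
- elim/grown_cases: w => [|| t tx tm]; rewrite ?x_odd ?m_lcp //.
  by have [-> -> _ _ _] := grown_other tx tm; apply (even_lcp_even I).
- elim/grown_cases: w => [|| t tx tm]; rewrite ?x_lcpo ?m_lcpo //.
    by move=> _; move: D_even; lia.
  by have [_ _ -> _ _] := grown_other tx tm; apply (lcpo_gt0_odd I).
- elim/grown_cases: w => [|| t tx tm]; rewrite ?x_lcpo ?m_lcpo; try lia.
  by have [_ _ -> _ _] := grown_other tx tm; apply (lcpo_lt_phase I).
- elim/grown_cases: w => [|| t tx tm]; rewrite ?x_lcpo ?m_lcp //; first lia.
  by have [-> -> -> _ _] := grown_other tx tm; apply (born_even_lcp_le I).
- exact: forest_inv_grow.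
- elim/grown_cases: v' => [|| t tx tm]; rewrite ?x_odd ?m_lcp //; first lia.
  have [-> -> _ _ _] := grown_other tx tm => ht htw hD hor.
  have [w_lab le_lcp le_lcpo] := neighbour_labelled I ht htw hD hor.
  by have [-> -> -> _ _] := grown_labelled w_lab.
Qed.
End GrowStep.

Lemma invariant_grow_step D s v x s' :
  invariant D true s -> grow_step adj mate D s v x s' -> invariant D true s'.
Proof. by move=> I /grow_stepE[elig [m hm ->]]; apply: invariant_grow. Qed.

Lemma root_mem s u : Defs.root mate s u \in anc mate s u.
Proof. by rewrite /Defs.root /anc /=; apply: mem_last. Qed.

Lemma lca_mem s u v : Defs.root mate s u = Defs.root mate s v ->
  lca mate s u v \in anc mate s u /\ lca mate s u v \in anc mate s v.
Proof.
move=> ruv; have : Defs.root mate s u \in [seq w <- anc mate s u | w \in anc mate s v].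
  by rewrite mem_filter {1}ruv !root_mem.
rewrite /lca; case E: [seq w <- _ | _] => [//|w l] _ /=.
by have := mem_head w l; rewrite -E mem_filter => /andP[-> ->].
Qed.

Definition turns_even (s : state T) (P : seq (node T)) (w : T) : bool :=
  ((false, w) \in P) && (lab s w == Odd).

Definition joins (s : state T) (B : node T) (P : seq (node T)) (w : T) : bool :=
  ((lab s w == Even) && (((true, blos s w) \in P) || ((true, blos s w) == B)))
  || turns_even s P w.

Definition bridged (s : state T) (x y : T) (B : node T) (P : seq (node T)) : state T :=
  State (fun w => if turns_even s P w then Even else lab s w)
        (fun w => if turns_even s P w then lcp s x + 1 + lcp s y - lcpo s w else lcp s w)
        (lcpo s) (oparent s)
        (fun w => if joins s B P w then B.2 else blos s w).

Lemma bridge_stepE D s x y s' : bridge_step adj mate D s x y s' ->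
  let Bx := (true, blos s x) in let By := (true, blos s y) in
  let B := lca mate s Bx By in
  [/\ is_bridge adj mate D s x y, B.1 = true, B \in anc mate s Bx, B \in anc mate s By
    & s' = bridged s x y B (pathto mate s Bx B ++ pathto mate s By B)].
Proof. by case=> br [/lca_mem[inx iny] [? ->]]. Qed.

Section BridgeStep.
Variables (D : nat) (s : state T) (x y b : T).
Hypotheses (I : invariant D false s) (x_even : lab s x = Even) (y_even : lab s y = Even).
Hypothesis lcp_sum : lcp s x + lcp s y = 2 * D - 2.
Hypotheses (Bx : (true, b) \in anc mate s (true, blos s x))
           (By : (true, b) \in anc mate s (true, blos s y)).
Let P := pathto mate s (true, blos s x) (true, b) ++ pathto mate s (true, blos s y) (true, b).
Let s' := bridged s x y (true, b) P.
Let F := inv_forest I.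
Let Cx := chain_facts_ancs F (2 * #|T|).+1 x_even.
Let Cy := chain_facts_ancs F (2 * #|T|).+1 y_even.

Let base_even : exists2 w, lab s w = Even & blos s w = b.
Proof. exact (chain_blossom_even Cx Bx). Qed.

Let path_odd_gt p z : mate b = Some p -> (false, z) \in P -> lcpo s p < lcpo s z.
Proof.
move=> hp; rewrite mem_cat => /orP[].
  by move/(chain_below_odd Cx Bx hp).
by move/(chain_below_odd Cy By hp).
Qed.

Let path_even_lcpo_lt p w :
  mate b = Some p -> lab s w = Even -> (true, blos s w) \in P -> lcpo_lt s p w.
Proof.
move=> hp hw; rewrite mem_cat => /orP[].
  by move/(chain_below_even Cx Bx hp hw).
by move/(chain_below_even Cy By hp hw).
Qed.

Let path_mate_closed w p : lab s w = Even -> mate (blos s w) = Some p ->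
  (false, p) \in P -> (true, blos s w) \in P.
Proof.
move=> hw hp; rewrite !mem_cat => /orP[].
  by move/(chain_mate_closed Cx Bx hw hp) ->.
by move/(chain_mate_closed Cy By hw hp) ->; rewrite orbT.
Qed.

Let base_mate_stays p : mate b = Some p -> turns_even s P p = false.
Proof.
move=> hp; apply/negbTE; rewrite negb_and; case: (boolP (_ \in P)) => //.
by move/(path_odd_gt hp); rewrite ltnn.
Qed.

Let turning w : turns_even s P w -> lab s w = Odd /\ (false, w) \in P.
Proof. by case/andP=> ? /eqP. Qed.

Let not_turning w : lab s w <> Odd -> turns_even s P w = false.
Proof. by move=> hw; apply/negbTE; rewrite negb_and; apply/orP; right; apply/eqP. Qed.

Let turning_lcp_ge w : turns_even s P w -> D <= lcp s' w.
Proof. by rewrite /= => ->; have := lcpo_lt_phase I w; lia. Qed.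

Let bridged_lab w : lab s' w = if turns_even s P w then Even else lab s w.
Proof. by []. Qed.

Let bridged_blos w : blos s' w = if joins s (true, b) P w then b else blos s w.
Proof. by []. Qed.

Let joins_turning w : turns_even s P w -> joins s (true, b) P w.
Proof. by rewrite /joins => ->; rewrite orbT. Qed.

Let bridged_kept w : ~~ turns_even s P w -> lab s' w = lab s w /\ lcp s' w = lcp s w.
Proof. by rewrite /= => /negbTE ->. Qed.

Lemma forest_inv_bridge : forest_inv s'.
Proof.
have stays_odd t : lab s' t = Odd -> lab s t = Odd /\ ~~ turns_even s P t.
  by rewrite bridged_lab; case: ifP.
have stays_even t : lab s t = Even -> lab s' t = Even /\ lcp s' t = lcp s t.
  by move=> ht; rewrite -{1}ht; apply: bridged_kept; rewrite not_turning ?ht.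
split=> [z|w p|z|w p].
- case/stays_odd=> /(oparent_even F) hp _; exact: (stays_even _ hp).1.
- move=> hw'; rewrite bridged_blos; case J: (joins _ _ _ w) => hp.
    have [w0 hw0 hb0] := base_even; rewrite bridged_lab (base_mate_stays hp).
    by rewrite -hb0 in hp; exact (base_mate_odd F hw0 hp).
  have Tw : turns_even s P w = false by apply: contraFF J; exact: joins_turning.
  move: hw'; rewrite bridged_lab Tw => hw; have p_odd := base_mate_odd F hw hp.
  rewrite bridged_lab p_odd; case: ifP => // /turning[_ /(path_mate_closed hw hp) inP].
  by move: J; rewrite /joins hw inP.
- case/stays_odd=> hz _; change (lcp s' (oparent s z) < lcpo s z).
  by have [_ ->] := stays_even _ (oparent_even F hz); exact (lcp_oparent_lt F hz).
- move=> hw'; rewrite bridged_blos; case Tw: (turns_even s P w).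
    rewrite joins_turning // => hp; have [_ inP] := turning Tw.
    split=> [|_]; last exact: path_odd_gt hp inP.
    change (lcpo s p < lcp s' w); have := turning_lcp_ge Tw; have := lcpo_lt_phase I p; lia.
  move: hw'; have [-> lcp_w] := bridged_kept (negbT Tw); rewrite /lcpo_lt lcp_w => hw.
  case J: (joins _ _ _ w) => hp; last exact (base_mate_lcpo_lt F hw hp).
  move: J; rewrite /joins Tw hw orbF /= => /orP[inP|/eqP[hb]].
    exact: path_even_lcpo_lt hp hw inP.
  by rewrite -hb in hp; exact (base_mate_lcpo_lt F hw hp).
Qed.

Lemma invariant_bridge : invariant D false s'.
Proof.
have kept_unl t : lab s' t = Unl -> lab s t = Unl by rewrite bridged_lab; case: ifP.
have kept_odd t : lab s' t = Odd -> lab s t = Odd by rewrite bridged_lab; case: ifP.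
have turning_lcpo t : turns_even s P t -> 0 < lcpo s t.
  by case/turning => /(odd_lcpo_gt0 I).
split=> [||w|w|w|w|w|w||v w].
- exact: phase_gt0 I.
- move=> w /kept_unl /(unl_mate_unl I)[m hm m_unl].
  by exists m; rewrite // bridged_lab not_turning m_unl.
- by move/kept_unl/(unl_lcpo0 I).
- by move/kept_odd/(odd_lcpo_gt0 I).
- case Tw: (turns_even s P w); last first.
    by have [-> ->] := bridged_kept (negbT Tw); apply (even_lcp_even I).
  have := lcpo_gt0_odd I (turning_lcpo _ Tw); have := lcpo_lt_phase I w.
  by rewrite /= Tw; move: lcp_sum; lia.
- apply (lcpo_gt0_odd I).
- apply (lcpo_lt_phase I).
- case Tw: (turns_even s P w).
    by have := turning_lcpo _ Tw; change (lcpo s' w) with (lcpo s w); lia.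
  by have [-> ->] := bridged_kept (negbT Tw); apply (born_even_lcp_le I).
- exact: forest_inv_bridge.
- case Tv: (turns_even s P v) => hv; first by have := turning_lcp_ge Tv; lia.
  have [lab_v lcp_v] := bridged_kept (negbT Tv); rewrite lab_v lcp_v in hv *.
  move=> hvw hD hor; have [w_lab w_lcp w_lcpo] := neighbour_labelled I hv hvw hD hor.
  case Tw: (turns_even s P w); last by have [-> ->] := bridged_kept (negbT Tw).
  split; [by rewrite bridged_lab Tw | move=> w0 | exact: w_lcpo].
  by have := turning_lcpo _ Tw; rewrite [lcpo s' w]/= w0.
Qed.

End BridgeStep.

Lemma invariant_bridge_step D s x y s' :
  invariant D false s -> bridge_step adj mate D s x y s' -> invariant D false s'.
Proof.
move=> I /bridge_stepE[[_ [_ [x_even [y_even [_ sum]]]]] + Bx By ->].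
by case: (lca _ _ _ _) Bx By => [[] b] // Bx By _; apply: invariant_bridge.
Qed.

Lemma bridge_step_keeps_even D s x y s' v : bridge_step adj mate D s x y s' ->
  lab s v = Even -> lab s' v = Even /\ lcp s' v = lcp s v.
Proof. by case/bridge_stepE=> _ _ _ _ -> hv; rewrite /= /turns_even hv andbF. Qed.

Definition config_inv (c : config T) : Prop := invariant c.1.1 c.1.2 c.2.

Lemma config_inv_step c c' : step adj mate c c' -> config_inv c -> config_inv c'.
Proof.
case=> /= [D s v x s' /[swap] I|D s no_growth I|D s x y s' /[swap] I| D s _ I].
- exact: invariant_grow_step.
- exact: invariant_end_growth.
- exact: invariant_bridge_step.
- exact: invariant_end_bridges.
Qed.

Lemma config_inv_reach c c' : reach adj mate c c' -> config_inv c -> config_inv c'.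
Proof. by elim=> // c1 c2 c3 st _ IH /(config_inv_step st). Qed.

Lemma reach_phase_mono c c' : reach adj mate c c' -> c.1.1 <= c'.1.1.
Proof. by elim=> // c1 c2 c3 st _; apply: leq_trans; case: st. Qed.

Lemma bridge_phase_keeps_even c c' : reach adj mate c c' ->
  forall D s s', c = (D, false, s) -> c' = (D, false, s') ->
  forall v, lab s v = Even -> lab s' v = Even /\ lcp s' v = lcp s v.
Proof.
elim=> [c0|c1 c2 c3 st r IH] D s s' E E' v hv.
  by move: E'; rewrite E => -[<-].
case: st E r IH => // [D0 s0 x y s1 st [eD es] _ IH|D0 s0 _ [eD es] r _]; subst.
  have [hv1 lcp1] := bridge_step_keeps_even st hv.
  by have [-> ->] := IH _ s1 s' erefl erefl v hv1.
by have /= := reach_phase_mono r; lia.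
Qed.

Lemma skewC a b : skew a b = skew b a.
Proof. by rewrite /skew addnC. Qed.

Lemma anc_odd_lcpo_le_minn D s x y z : invariant D false s ->
  lab s x = Even -> lab s y = Even -> adj x y -> lcp s x + lcp s y = 2 * D - 2 ->
  skew (lcp s x) (lcp s y) <> 0 -> skew (lcp s x) (lcp s y) <> 2 ->
  (false, z) \in anc mate s (true, blos s x) -> lcpo s z <= minn (lcp s x) (lcp s y).
Proof.
rewrite /skew => I x_even y_even xy sum skew0 skew2 z_anc.
have [z_lt_x z_lt_x'] :=
  chain_odd_lcpo_lt (chain_facts_ancs (inv_forest I) (2 * #|T|).+1 x_even) z_anc.
have [x_le_y|y_lt_x] := leqP (lcp s x) (lcp s y); first lia.
have yx : adj y x by rewrite adj_sym.
have y_le : lcp s y + 2 <= D by lia.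
have [_ born_even born_odd] := neighbour_labelled I y_even yx y_le isT.
have [x0|x_gt0] := posnP (lcpo s x); first by have := born_even x0; lia.
by have := born_odd x_gt0; have := z_lt_x' x_gt0; lia.
Qed.

Lemma bridge_lcp_gt_maxn D s x y s' z : invariant D false s ->
  bridge_step adj mate D s x y s' ->
  skew (lcp s x) (lcp s y) <> 0 -> skew (lcp s x) (lcp s y) <> 2 ->
  lab s z = Odd -> lab s' z = Even -> maxn (lcp s x) (lcp s y) < lcp s' z.
Proof.
move=> I st skew0 skew2 z_odd; have /bridge_stepE[br _ _ _ ->] := st.
case: br => xy [_ [x_even [y_even [_ sum]]]].
rewrite /= /turns_even z_odd andbT; case: ifP => // + _; rewrite mem_cat => /orP[] /mem_take.
  by move/(anc_odd_lcpo_le_minn I x_even y_even xy sum skew0 skew2); lia.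
rewrite skewC in skew0 skew2; rewrite addnC in sum; rewrite adj_sym in xy.
by move/(anc_odd_lcpo_le_minn I y_even x_even xy sum skew0 skew2); lia.
Qed.
End PartI.

Theorem lemma5 (T : finType) (adj : rel T) (mate : T -> option T)
  (adj_sym : symmetric adj) (adj_irr : irreflexive adj)
  (mate_matching : forall u v, mate u = Some v -> adj u v /\ mate v = Some u)
  (D : nat) (s s' : state T) (x y z : T) :
  reach adj mate (init_config mate) (D, false, s) ->
  bridge_step adj mate D s x y s' ->
  skew (lcp s x) (lcp s y) <> 0 ->
  skew (lcp s x) (lcp s y) <> 2 ->
  lab s z = Odd -> lab s' z = Even ->
  maxn (lcp s x) (lcp s y) < lcp s' z /\
  (forall (s'' : state T) (w : T),
     reach adj mate (D, false, s') (D, false, s'') ->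
     is_bridge adj mate D s'' z w \/ is_bridge adj mate D s'' w z ->
     skew (lcp s x) (lcp s y) < skew (lcp s'' z) (lcp s'' w)).
Proof.
move=> reach0 st skew0 skew2 z_odd z_even.
have I : invariant adj mate D false s.
  exact (config_inv_reach adj_irr mate_matching reach0 (invariant_init mate_matching)).
have z_gt := bridge_lcp_gt_maxn adj_sym mate_matching I st skew0 skew2 z_odd z_even.
split=> // s'' w reach1 zw.
have [_ lcp_z] := bridge_phase_keeps_even reach1 erefl erefl z_even.
have [[_ [_ [_ [_ [_ sum_xy]]]]] _ _ _ _] := bridge_stepE st.
have sum_zw : lcp s'' z + lcp s'' w = 2 * D - 2.
  by case: zw => -[_ [_ [_ [_ [_ sum]]]]]; lia.
by move: skew0 skew2 z_gt sum_zw; rewrite /skew lcp_z; lia.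
Qed.
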